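(* Let $R$ be a ring, $n\ge 2$, and let $A=(a_{ij})\in\mathbb{M}_n(R)$ be a matrix such that $a_{i+1,i}=1$ for $1\le i\le n-1$ and $a_{ij}=0$ whenever $i>j+1$ (the entries $a_{ij}$ with $i\le j$ are arbitrary). Then for each $k=1,\dots,n$, the entries of $A^k=(b_{ij})$ satisfy: $b_{k+j-1,\,j}=a_{jj}+a_{j+1,j+1}+\cdots+a_{j+k-1,j+k-1}$ for $1\le j\le n-k+1$; $b_{k+j,\,j}=1$ for $1\le j\le n-k$; and $b_{ij}=0$ whenever $i>k+j$. In particular, the $(k,1)$-entry of $A^k$ is $a_{11}+\cdots+a_{kk}$, and the $(n,1)$-entry of $A^n$ is $a_{11}+\cdots+a_{nn}$.
   Context: All rings are associative with identity; $\mathbb{M}_n(R)$ denotes the ring of $n\times n$ matrices over $R$. *)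

From mathcomp Require Import all_boot all_algebra.
Set Implicit Arguments.
Unset Strict Implicit.
Unset Printing Implicit Defensive.

From mathcomp Require Import all_boot all_algebra.
From mathcomp Require Import zify.
Import GRing.Theory.
Local Open Scope ring_scope.

(* A matrix B has lower bandwidth k when B i j = 0 for i > k + j.  Bandwidths
   add under multiplication, so A ^+ k has bandwidth k when A has bandwidth 1;
   this is the vanishing part of the theorem.  For the two remaining diagonals
   we use a column expansion: if B has bandwidth k and i >= k + j, then in
   (B * A) i j = \sum_l B i l * A l j only l = j and l = j + 1 survive, giving
   B i j * A j j + B i (j+1), since A (j+1) j = 1.  Induction on k with this
   expansion shows that the (k+1)-th subdiagonal of A ^+ (k+1) is constantly 1
   and that its k-th subdiagonal holds the sums of k+1 consecutive diagonal
   entries of A (peeling off the first summand, see [diag_sum_S]).  The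
   special entries (k, 1) and (n, 1) are the instances j = 1. *)

Section LowerBand.
Context {R : pzRingType}.

Definition lower_band {p q : nat} (k : nat) (B : 'M[R]_(p, q)) :=
  forall (i : 'I_p) (j : 'I_q), (k + j < i)%N -> B i j = 0.

Lemma lower_band_mul p q r k l (B : 'M[R]_(p, q)) (C : 'M[R]_(q, r)) :
  lower_band k B -> lower_band l C -> lower_band (k + l) (B *m C).
Proof.
move=> bandB bandC i j ltij; rewrite mxE big1 // => t _.
have [ltjt | letj] := ltnP (l + j) t; first by rewrite bandC ?mulr0.
by rewrite bandB ?mul0r //; lia.
Qed.

Lemma lower_band_exp n k (A : 'M[R]_n) :
  lower_band 1 A -> lower_band k (A ^+ k).
Proof.
move=> bandA; elim: k => [|k IHk].
  move=> i j lt_ji; rewrite expr0 -idmxE mxE.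
  by case: eqP => [ij|]; [rewrite ij ltnn in lt_ji | rewrite mulr0n].
by rewrite exprSr -mulmxE -addn1; exact: lower_band_mul.
Qed.

End LowerBand.

Section HessenbergPowers.
Context {R : pzRingType} {n : nat}.
Variable A : 'M[R]_n.
Hypothesis sub_diag1 : forall i j : 'I_n, (i = j.+1 :> nat) -> A i j = 1.
Hypothesis band1 : lower_band 1 A.

Definition diag_sum (j k : nat) : R := \sum_(l < n | (j <= l < j + k)%N) A l l.

Lemma diag_sum0 j : diag_sum j 0 = 0.
Proof. by rewrite /diag_sum big_pred0 // => l; rewrite addn0; lia. Qed.

Lemma diag_sum_S (j : 'I_n) k : diag_sum j k.+1 = A j j + diag_sum j.+1 k.
Proof.
rewrite /diag_sum (bigD1 j) /=; last by rewrite leqnn; lia.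
by congr (_ + _); apply: eq_bigl => l; rewrite -(inj_eq val_inj) /=; lia.
Qed.

Lemma mul_hessenberg_entry {k} {B : 'M[R]_n} {i j j' : 'I_n} :
  lower_band k B -> j' = j.+1 :> nat -> (k + j <= i)%N ->
  (B *m A) i j = B i j * A j j + B i j'.
Proof.
move=> bandB def_j' le_i; rewrite mxE (bigD1 j) //= (bigD1 j') /=; last first.
  by apply/eqP => /(congr1 val) /=; lia.
rewrite (sub_diag1 j' j) // mulr1 addrA big1 ?addr0 // => l /andP [/eqP ne_lj /eqP ne_lj'].
have ne_val : (l : nat) <> j /\ (l : nat) <> j'.
  by split=> E; [apply: ne_lj | apply: ne_lj']; apply: val_inj.
have [le_lj1 | lt_j1l] := leqP l j.+1; last by rewrite band1 ?mulr0.
by rewrite bandB ?mul0r //; lia.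
Qed.

Lemma hessenberg_power_diagonals k :
  (forall i j : 'I_n, (i = k + j :> nat)%N -> (A ^+ k.+1) i j = diag_sum j k.+1)
  /\ (forall i j : 'I_n, (i = k.+1 + j :> nat)%N -> (A ^+ k.+1) i j = 1).
Proof.
elim: k => [|k [IHdiag IHsub]].
  split=> i j def_i; rewrite expr1; last exact: sub_diag1.
  rewrite diag_sum_S diag_sum0 addr0; congr (A _ _); exact: val_inj.
have succ_ord (i j : 'I_n) : (j < i)%N -> {j' : 'I_n | j' = j.+1 :> nat}.
  by move=> lt_ji; exists (Ordinal (leq_ltn_trans lt_ji (ltn_ord i))).
have bandk : lower_band k.+1 (A ^+ k.+1) by exact: lower_band_exp.
split=> i j def_i; have [j' def_j'] := succ_ord i j ltac:(lia);
  rewrite exprSr -mulmxE (mul_hessenberg_entry bandk def_j') ?def_i //.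
- by rewrite IHsub // (IHdiag i j') ?def_i ?def_j' ?addnS // mul1r diag_sum_S.
- by rewrite bandk ?mul0r ?add0r ?(IHsub i j') ?def_i ?def_j' ?addnS //; lia.
Qed.

End HessenbergPowers.

(* The matrix has size n = m + 2 >= 2 and indices are 0-based: the paper's
   a_{ij} is A (i-1) (j-1). *)
Theorem lemma3p4 (R : pzRingType) (m : nat) (A : 'M[R]_m.+2)
  (Hsub : forall i j : 'I_m.+2, (i = j.+1 :> nat) -> A i j = 1)
  (Hlow : forall i j : 'I_m.+2, (j.+1 < i)%N -> A i j = 0) :
  (forall k : nat, (1 <= k <= m.+2)%N ->
     [/\ (forall i j : 'I_m.+2, (i = k + j - 1 :> nat)%N ->
            (A ^+ k) i j = \sum_(l < m.+2 | (j <= l < j + k)%N) A l l),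
         (forall i j : 'I_m.+2, (i = k + j :> nat)%N -> (A ^+ k) i j = 1)
       & (forall i j : 'I_m.+2, (k + j < i)%N -> (A ^+ k) i j = 0)])
  /\ (forall k : nat, (1 <= k <= m.+2)%N ->
        (A ^+ k) (inord k.-1) ord0 = \sum_(l < m.+2 | (l < k)%N) A l l)
  /\ (A ^+ m.+2) ord_max ord0 = \sum_(l < m.+2) A l l.
Proof.
have powers k : (1 <= k <= m.+2)%N -> [/\
    forall i j : 'I_m.+2, (i = k + j - 1 :> nat)%N -> (A ^+ k) i j = diag_sum A j k,
    forall i j : 'I_m.+2, (i = k + j :> nat)%N -> (A ^+ k) i j = 1
  & lower_band k (A ^+ k)].
  case: k => [//|k] _; have [diag sub] := hessenberg_power_diagonals A Hsub Hlow k.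
  split=> [i j def_i||]; [apply: diag; lia | exact: sub | exact: lower_band_exp].
have first_column k : (1 <= k <= m.+2)%N ->
    (A ^+ k) (inord k.-1) ord0 = \sum_(l < m.+2 | (l < k)%N) A l l.
  move=> k_range; have [diag _ _] := powers k k_range.
  have lt_k1 : (k.-1 < m.+2)%N by lia.
  rewrite diag; last by rewrite inordK //=; lia.
  by apply: eq_bigl => l.
split; first exact: powers.
split; first exact: first_column.
have -> : ord_max = inord m.+1 :> 'I_m.+2 by apply: val_inj; rewrite /= inordK.
by rewrite (first_column m.+2 (leqnn _)); under eq_bigl => l do rewrite ltn_ord.
Qed.
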